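(* For $\lambda,\mu,\nu\in\mathcal{A}_{k,n}$, $$N^\nu_{\lambda\mu}=\sum_{\boldsymbol{\nu}}c^{\boldsymbol{\nu}}_{\boldsymbol{\lambda}\boldsymbol{\mu}}\frac{f_{\boldsymbol{\nu}}}{f_{\boldsymbol{\lambda}}f_{\boldsymbol{\mu}}},$$ where the sum runs over all $n$-multipartitions $\boldsymbol{\nu}$ with $|\nu^{(i)}|=m_i(\nu)$ for $i=1,\dots,n$, and $\boldsymbol{\lambda},\boldsymbol{\mu}$ are any $n$-multipartitions with $|\lambda^{(i)}|=m_i(\lambda)$ and $|\mu^{(i)}|=m_i(\mu)$ for all $i$.
   Context: Fix $k,n\ge1$ and a primitive $n$-th root of unity $\zeta$. $\mathcal{A}_{k,n}$ is the set of integer vectors $\lambda=(\lambda_1,\dots,\lambda_k)$ with $n\ge\lambda_1\ge\cdots\ge\lambda_k>0$; $m_i(\lambda)$ is the multiplicity of $i$, $|\lambda|=\sum\lambda_i$; $S_\lambda$ is its stabiliser in $S_k$ under $\lambda\circ w=(\lambda_{w(1)},\dots,\lambda_{w(k)})$ and $S^\lambda$ the minimal length representatives of $S_\lambda\backslash S_k$. $N^\nu_{\lambda\mu}=\#\{(w,w')\in S^\lambda\times S^\mu:\lambda\circ w+\mu\circ w'=(\nu_i+n\alpha_i)_{i=1}^k\text{ for some }\alpha\in\mathbb{Z}^k,\ \sum\alpha_i=(|\lambda|+|\mu|-|\nu|)/n\}$. The generalised symmetric group is $S(n,k)=\mathcal{C}_n^{\times k}\rtimes S_k$ ($\mathcal{C}_n$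 cyclic of order $n$); $y_i$ denotes the generator of the $i$-th copy of $\mathcal{C}_n$ and $y^\alpha=y_1^{\alpha_1}\cdots y_k^{\alpha_k}$. An $n$-multipartition of $k$ is $\boldsymbol{\lambda}=(\lambda^{(1)},\dots,\lambda^{(n)})$ with $\sum|\lambda^{(i)}|=k$; $f_{\boldsymbol{\lambda}}=\prod_if_{\lambda^{(i)}}$ with $f_{\lambda^{(i)}}$ the number of standard Young tableaux of shape $\lambda^{(i)}$. The simple $S(n,k)$-modules $\mathcal{L}(\boldsymbol{\lambda})$ are labelled by $n$-multipartitions of $k$ so that $\operatorname{Tr}_{\mathcal{L}(\boldsymbol{\lambda})}y^\alpha=f_{\boldsymbol{\lambda}}\,m_\lambda(\zeta^\alpha)$ for all $\alpha\in\mathbb{Z}_n^{k}$, where $\lambda\in\mathcal{A}_{k,n}$ is the unique element with $m_i(\lambda)=|\lambda^{(i)}|$ and $m_\lambda(\zeta^\alpha)$ is the monomial symmetric polynomial evaluated at $(\zeta^{\alpha_1},\dots,\zeta^{\alpha_k})$. $c^{\boldsymbol{\nu}}_{\boldsymbol{\lambda}\boldsymbol{\mu}}$ are the structure constants of the representation ring: $\mathcal{L}(\boldsymbol{\lambda})\otimes\mathcal{L}(\boldsymbol{\mu})\cong\bigoplus_{\boldsymbol{\nu}}\mathcal{L}(\boldsymbol{\nu})^{\oplus c^{\boldsymbol{\nu}}_{\boldsymbol{\lambda}\boldsymbol{\mu}}}$. *)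

From Stdlib Require Import ClassicalEpsilon.
From HB Require Import structures.
From mathcomp Require Import all_boot all_order all_algebra all_fingroup.
From mathcomp Require Import all_solvable all_field all_character.
Set Implicit Arguments. Unset Strict Implicit. Unset Printing Implicit Defensive.
Import Order.TTheory GRing.Theory Num.Theory.
Local Open Scope ring_scope.

Definition bool_of (P : Prop) : bool :=
  if excluded_middle_informative P then true else false.

Definition inA (k n : nat) (lam : k.-tuple nat) : bool :=
  sorted geq lam && all (fun x => (0 < x <= n)%N) lam.

Definition tact (k : nat) (lam : k.-tuple nat) (w : 'S_k) : k.-tuple nat :=
  [tuple tnth lam (w j) | j < k].

(* Coxeter length of w in S_k = number of inversions *)
Definition plen (k : nat) (w : 'S_k) : nat :=
  #|[set p : 'I_k * 'I_k | (p.1 < p.2)%N && (w p.2 < w p.1)%N]|.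

(* w in S^lambda: w has minimal length in its coset S_lambda w
   (the coset S_lambda w is {v | lambda o v = lambda o w}) *)
Definition minrep (k : nat) (lam : k.-tuple nat) (w : 'S_k) : bool :=
  [forall v : 'S_k, (tact lam v == tact lam w) ==> (plen w <= plen v)%N].

Definition Ncoef (k n : nat) (lam mu nu : k.-tuple nat) : nat :=
  #|[set p : 'S_k * 'S_k | minrep lam p.1 && minrep mu p.2 &&
     bool_of (exists alpha : 'I_k -> int,
       (forall i : 'I_k,
          ((tnth (tact lam p.1) i + tnth (tact mu p.2) i)%N%:Z
            = (tnth nu i)%:Z + (n%:Z * alpha i)))
       /\ ((\sum_(i < k) alpha i)%:~R : rat)
            = ((sumn lam + sumn mu)%N%:Z - (sumn nu)%:Z)%:~R / n%:R)]|.

Definition monsym (R : nzRingType) (k : nat) (lam : k.-tuple nat) (x : 'I_k -> R) : R :=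
  \sum_(b <- undup [seq tact lam w | w <- enum 'S_k]) \prod_(j < k) x j ^+ tnth b j.

(* cell (r, c) (0-based) belongs to the Young diagram of p *)
Definition in_shape (p : seq nat) (x : nat * nat) : bool := (x.2 < nth 0%N p x.1)%N.

(* T : cells -> {1..m} (value 0 used outside the diagram) is a standard
   Young tableau of shape p, where m = |p| *)
Definition is_syt (p : seq nat) (m : nat) (T : {ffun 'I_m * 'I_m -> 'I_m.+1}) : bool :=
  [forall x : 'I_m * 'I_m, in_shape p (val x.1, val x.2) == (0 < T x)%N] &&
  [forall x : 'I_m * 'I_m, forall y : 'I_m * 'I_m,
     [&& in_shape p (val x.1, val x.2), in_shape p (val y.1, val y.2) & T x == T y]
       ==> (x == y)] &&
  [forall x : 'I_m * 'I_m, forall y : 'I_m * 'I_m,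
     (in_shape p (val x.1, val x.2) && in_shape p (val y.1, val y.2)) ==>
     (((x.1 == y.1) && (x.2 < y.2)%N) ==> (T x < T y)%N) &&
     (((x.2 == y.2) && (x.1 < y.1)%N) ==> (T x < T y)%N)].

Definition nsyt (p : seq nat) : nat :=
  #|[set T : {ffun 'I_(sumn p) * 'I_(sumn p) -> 'I_(sumn p).+1} | is_syt p T]|.

(* n-tuples of partitions with at most k parts, each part <= k, encoded as
   k-tuples padded with zeros *)
Definition mpart (k n : nat) := {ffun 'I_n -> k.-tuple 'I_k.+1}.

Definition part_of (k : nat) (t : k.-tuple 'I_k.+1) : seq nat := map val t.

Definition is_part (k : nat) (t : k.-tuple 'I_k.+1) : bool := sorted geq (part_of t).

Definition psize (k : nat) (t : k.-tuple 'I_k.+1) : nat := sumn (part_of t).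

Definition is_mpart (k n : nat) (b : mpart k n) : bool :=
  [forall i, is_part (b i)] && ((\sum_(i < n) psize (b i))%N == k).

Definition fmp (k n : nat) (b : mpart k n) : nat := (\prod_(i < n) nsyt (part_of (b i)))%N.

(* |lambda^(i)| = m_i(lam) for i = 1..n  (component index i : 'I_n stands for i+1) *)
Definition mp_type (k n : nat) (b : mpart k n) (lam : k.-tuple nat) : Prop :=
  forall i : 'I_n, psize (b i) = count_mem i.+1 lam.

(* realised as the wreath product C_n wr S_k acting on 'I_n * 'I_k:
   (a, j) |-> (a + alpha_j mod n, w j) *)
Definition wreath_set (n k : nat) : {set {perm 'I_n * 'I_k}} :=
  [set g : {perm 'I_n * 'I_k} | [exists alpha : {ffun 'I_k -> 'I_n}, exists w : 'S_k,
     [forall x : 'I_n * 'I_k,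
        (val (g x).1 == (val x.1 + val (alpha x.2)) %% n)%N && ((g x).2 == w x.2)]]].

Definition SG (n k : nat) : {group {perm 'I_n * 'I_k}} := <<wreath_set n k>>%G.

Definition is_yalpha (n k : nat) (alpha : 'I_k -> 'I_n) (g : {perm 'I_n * 'I_k}) : Prop :=
  forall x : 'I_n * 'I_k, val (g x).1 = ((val x.1 + val (alpha x.2)) %% n)%N /\ (g x).2 = x.2.

Definition cstr (gT : finGroupType) (G : {group gT}) (i j l : Iirr G) : algC :=
  '['chi_i * 'chi_j, 'chi_l].

From Stdlib Require Import ClassicalEpsilon.
From HB Require Import structures.
From mathcomp Require Import all_boot all_order all_algebra all_fingroup.
From mathcomp Require Import all_solvable all_field all_character.
From mathcomp Require Import zify ring.
Import Order.TTheory GRing.Theory Num.Theory.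
Set Implicit Arguments. Unset Strict Implicit. Unset Printing Implicit Defensive.

(* Both sides are obtained by averaging over the diagonal elements y^alpha of S(n,k) against
   zeta^(-alpha.nu).  Since the trace of L(b) at y^alpha is f_b m_lam(zeta^alpha), evaluating
   chi_lam chi_mu = sum_nu c^nu_{lam mu} chi_nu at y^alpha and using the orthogonality
   sum_alpha m_rho(zeta^alpha) zeta^(-alpha.nu) = n^k [rho = nu] on A_{k,n} gives n^k f_lam f_mu
   times the right-hand side.  The same average of m_lam m_mu is n^k times the number of pairs
   (b, c) of rearrangements of lam and mu with b + c = nu (mod n).  On the other side, w lies in
   S^lam iff w sorts lam o w stably, so w |-> lam o w maps S^lam bijectively onto the
   rearrangements of lam; as the condition on sum alpha in N^nu_{lam mu} follows from the
   congruences, N^nu_{lam mu} counts the same pairs. *)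

Lemma geqn_trans : transitive geq.
Proof. by move=> a b c ba cb; apply: leq_trans cb ba. Qed.

Lemma geqn_anti : antisymmetric geq.
Proof. by move=> a b /andP[ba ab]; apply/anti_leq/andP. Qed.

Lemma geqn_total : total geq.
Proof. by move=> a b; apply: leq_total. Qed.

Lemma card_ord_ltn k m : (m <= k)%N -> #|[set i : 'I_k | (i < m)%N]| = m.
Proof.
move=> mk; rewrite cardsE cardE /enum_mem -enumT size_filter -(count_map val (gtn m)).
by rewrite val_enum_ord -size_filter (filter_iota_ltn 0 mk) size_iota.
Qed.

Section StableSort.
Variable k : nat.
Implicit Types (lam rho b : k.-tuple nat) (v w : 'S_k) (p q j : 'I_k).

Lemma tact_tnth lam w j : tnth (tact lam w) j = tnth lam (w j).
Proof. by rewrite tnth_map tnth_ord_tuple. Qed.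

Lemma tactM lam v w : tact (tact lam v) w = tact lam (w * v).
Proof. by apply: eq_from_tnth => j; rewrite !tact_tnth permM. Qed.

Lemma tact1 lam : tact lam 1 = lam.
Proof. by apply: eq_from_tnth => j; rewrite tact_tnth perm1. Qed.

Lemma perm_tact lam w : perm_eq (tact lam w) lam.
Proof. by apply/tuple_permP; exists w. Qed.

Definition rearrangements lam := undup [seq tact lam w | w <- enum 'S_k].

Lemma mem_rearrangements lam b : (b \in rearrangements lam) = perm_eq b lam.
Proof.
rewrite mem_undup; apply/mapP/tuple_permP => [[w _ ->]|[w /val_inj ->]];
  by exists w; rewrite ?mem_enum.
Qed.

(* The order in which the positions of rho come once rho is sorted stably into
   nonincreasing order. *)
Definition precedes rho p j :=
  (tnth rho j < tnth rho p)%N || (tnth rho p == tnth rho j) && (p < j)%N.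

Lemma precedes_irr rho p : precedes rho p p = false.
Proof. by rewrite /precedes ltnn eqxx ltnn. Qed.

Lemma precedes_trans rho q p j : precedes rho p q -> precedes rho q j -> precedes rho p j.
Proof.
rewrite /precedes; move: (tnth rho p) (tnth rho q) (tnth rho j) => a b c.
case/orP=> [h1|/andP[/eqP h1 h2]]; case/orP=> [h3|/andP[/eqP h3 h4]]; apply/orP.
- by left; lia.
- by left; lia.
- by left; lia.
- by right; apply/andP; split; [apply/eqP; lia| lia].
Qed.

Lemma precedes_total rho p j : p != j -> precedes rho p j || precedes rho j p.
Proof.
rewrite /precedes -(inj_eq val_inj) /= => /negPf pj; move: (tnth rho p) (tnth rho j) => a b.
by case: ltngtP => //= _; rewrite -neq_ltn pj.
Qed.

Definition precedes_rank rho j := #|[set p | precedes rho p j]|.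

Lemma precedes_rank_lt rho p j :
  precedes rho p j -> (precedes_rank rho p < precedes_rank rho j)%N.
Proof.
move=> pj; apply/proper_card/properP; split.
  by apply/subsetP=> q; rewrite !inE => /precedes_trans; apply.
by exists p; rewrite !inE ?precedes_irr.
Qed.

Lemma precedes_rank_ltk rho j : (precedes_rank rho j < k)%N.
Proof.
rewrite -[k in (_ < k)%N]card_ord -cardsT; apply/proper_card/properP; split.
  exact: subsetT.
by exists j; rewrite !inE ?precedes_irr.
Qed.

Definition sorts_stably rho w := forall p j, precedes rho p j -> (w p < w j)%N.

Lemma sorts_stably_rank rho w :
  sorts_stably rho w -> forall j, val (w j) = precedes_rank rho j.
Proof.
move=> sw j; rewrite /precedes_rank.
have -> : [set p | precedes rho p j] = w @^-1: [set i : 'I_k | (i < w j)%N].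
  apply/setP=> p; rewrite !inE; apply/idP/idP; first exact: sw.
  have [-> | pj] := eqVneq p j; first by rewrite ltnn.
  by case/orP: (precedes_total rho pj) => // /sw; lia.
by rewrite card_preimset ?card_ord_ltn 1?ltnW //; apply: perm_inj.
Qed.

Lemma sorts_stably_inj rho v w : sorts_stably rho v -> sorts_stably rho w -> v = w.
Proof.
move=> sv sw; apply/permP => j; apply/val_inj.
by rewrite (sorts_stably_rank sv) (sorts_stably_rank sw).
Qed.

Lemma sorts_stably_exists rho : exists w, sorts_stably rho w.
Proof.
pose f j := Ordinal (precedes_rank_ltk rho j).
have f_inj : injective f.
  move=> p j /(congr1 val) /= e; apply/eqP/negP => /negP pj.
  by case/orP: (precedes_total rho pj) => /precedes_rank_lt; lia.
by exists (perm f_inj) => p j /precedes_rank_lt; rewrite !permE.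
Qed.

Lemma sorts_stably_sorted rho w : sorts_stably rho w -> sorted geq (tact rho w^-1%g).
Proof.
move=> sw; apply/(sortedP 0%N) => i; rewrite size_tuple => ik.
have i_lt_k : (i < k)%N by lia.
rewrite -(tnth_nth 0%N _ (Ordinal ik)) -(tnth_nth 0%N _ (Ordinal i_lt_k)) !tact_tnth.
set p := (w^-1 _)%g; set q := (w^-1 _)%g.
have qp : q != p by apply: contraTneq isT => /perm_inj/(congr1 val)/=; lia.
case/orP: (precedes_total rho qp) => [/sw | ]; first by rewrite !permKV /=; lia.
by rewrite /= /precedes => /orP[/ltnW | /andP[/eqP -> _]].
Qed.

End StableSort.

Section MinimalCosetRepresentatives.
Variables (k : nat) (lam : k.-tuple nat).
Hypothesis lam_sorted : sorted geq lam.
Implicit Types (rho : k.-tuple nat) (v w : 'S_k).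

Lemma sorted_tnth_geq (i j : 'I_k) : (i <= j)%N -> (tnth lam j <= tnth lam i)%N.
Proof.
move=> ij; rewrite !(tnth_nth 0%N).
by apply: (sorted_leq_nth geqn_trans leqnn) => //; rewrite inE size_tuple.
Qed.

Lemma mem_rearrangements_sorted rho :
  sorted geq rho -> (rho \in rearrangements lam) = (rho == lam).
Proof.
move=> rho_sorted; rewrite mem_rearrangements; apply/idP/eqP => [rho_lam | -> //].
exact/val_inj/(sorted_eq geqn_trans geqn_anti).
Qed.

Lemma sorts_stably_tact w v : sorts_stably (tact lam w) v -> tact lam v = tact lam w.
Proof.
set rho := tact lam w => sv.
have -> : lam = tact rho v^-1%g.
  apply/val_inj/(sorted_eq geqn_trans geqn_anti) => //; first exact: sorts_stably_sorted.
  by rewrite perm_sym (perm_trans (perm_tact _ _)) ?perm_tact.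
by rewrite tactM mulgV tact1.
Qed.

Definition ascents rho :=
  [set p : 'I_k * 'I_k | (p.1 < p.2)%N && (tnth rho p.1 < tnth rho p.2)%N].

Definition tied_inversions w := [set p : 'I_k * 'I_k |
  [&& (p.1 < p.2)%N, (w p.2 < w p.1)%N & tnth lam (w p.1) == tnth lam (w p.2)]].

(* As lam is nonincreasing, the inversions of w between distinct entries of lam
   are the ascents of lam o w, which only depend on the coset S_lam w. *)
Lemma plen_ascents_tied w : plen w = (#|ascents (tact lam w)| + #|tied_inversions w|)%N.
Proof.
rewrite /plen -(cardsID [set p : 'I_k * 'I_k | tnth lam (w p.1) == tnth lam (w p.2)]) addnC.
congr (_ + _)%N; apply: eq_card => p; rewrite !inE ?tact_tnth; last by rewrite andbA.
case: (p.1 < p.2) => /=; last by rewrite andbF.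
case: ltnP => [/ltnW | ] /sorted_tnth_geq; first by rewrite ltn_neqAle => ->; rewrite andbT.
by rewrite andbF ltnNge => ->.
Qed.

Lemma tied_inversions_eq0 w : #|tied_inversions w| = 0%N <-> sorts_stably (tact lam w) w.
Proof.
split => [/eqP | sw]; last first.
  apply/eqP; rewrite cards_eq0; apply/eqP/setP=> [[p j]]; rewrite !inE /=.
  apply/negP => /and3P[pj wjp /eqP e].
  by have := sw p j; rewrite /precedes !tact_tnth e eqxx pj orbT => /(_ isT); lia.
rewrite cards_eq0 => /eqP no_tie p j; rewrite /precedes !tact_tnth.
case/orP=> [lt_pj | /andP[/eqP e pj]].
  by rewrite ltnNge; apply: contraL lt_pj => /sorted_tnth_geq; rewrite -leqNgt.
have : (p, j) \notin tied_inversions w by rewrite no_tie inE.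
rewrite inE /= pj e eqxx /= andbT -leqNgt leq_eqVlt => /orP[/eqP/val_inj/perm_inj jp | //].
by rewrite jp ltnn in pj.
Qed.

Lemma minrepP w : minrep lam w <-> sorts_stably (tact lam w) w.
Proof.
split => [/forallP min_w | sw]; last first.
  apply/forallP => v; apply/implyP => /eqP ev.
  by rewrite !plen_ascents_tied ev (proj2 (tied_inversions_eq0 w) sw) addn0 leq_addr.
have [v sv] := sorts_stably_exists (tact lam w).
have ev := sorts_stably_tact sv.
have := min_w v; rewrite ev eqxx /= !plen_ascents_tied ev.
move: sv; rewrite -{1}ev => /tied_inversions_eq0 ->; rewrite addn0 => le_w.
by apply/tied_inversions_eq0; lia.
Qed.

Lemma big_minrep (R : Type) (idx : R) (op : Monoid.com_law idx) (F : k.-tuple nat -> R) :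
  \big[op/idx]_(w | minrep lam w) F (tact lam w) =
  \big[op/idx]_(b <- rearrangements lam) F b.
Proof.
rewrite -(big_enum _ _ [pred w | minrep lam w]) /= -(big_map (tact lam) xpredT).
apply/perm_big/uniq_perm; [|exact: undup_uniq|].
  rewrite map_inj_in_uniq ?enum_uniq // => v w; rewrite !mem_enum !inE.
  by move=> /minrepP sv /minrepP sw e; rewrite e in sv; apply: sorts_stably_inj sv sw.
move=> b; rewrite mem_undup; apply/mapP/mapP => [[w _ ->] | [w _ ->]].
  by exists w; rewrite ?mem_enum.
have [v sv] := sorts_stably_exists (tact lam w).
by exists v; rewrite ?mem_enum ?inE ?minrepP (sorts_stably_tact sv).
Qed.

End MinimalCosetRepresentatives.

Lemma bool_ofP (P : Prop) : reflect P (bool_of P).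
Proof. by rewrite /bool_of; case: excluded_middle_informative; constructor. Qed.

Local Open Scope ring_scope.

Section CongruentPairs.
Variables (k n : nat).
Implicit Types (lam mu nu b c : k.-tuple nat).

Lemma inA_tnth lam j : inA n lam -> (0 < tnth lam j <= n)%N.
Proof. by case/andP=> _ /allP; apply; apply: mem_tnth. Qed.

Lemma sum_tnth_int b : \sum_(j < k) (tnth b j)%:Z = (sumn b)%:Z.
Proof. by rewrite sumnE big_tuple -[RHS]natz natr_sum; apply: eq_bigr => j _; rewrite natz. Qed.

(* b + c = nu (mod n); adding n - nu_j instead of subtracting nu_j avoids truncated
   subtraction in nat, as nu_j <= n for nu in A_{k,n}. *)
Definition congr_add b c nu := [forall j, n %| tnth b j + tnth c j + (n - tnth nu j)]%N.

Definition congr_pairs lam mu nu :=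
  (\sum_(b <- rearrangements lam) \sum_(c <- rearrangements mu) congr_add b c nu)%N.

Lemma exists_shift_congr b c nu : (0 < n)%N -> (forall j, tnth nu j <= n)%N ->
  bool_of (exists alpha : 'I_k -> int,
    (forall i, (tnth b i + tnth c i)%N%:Z = (tnth nu i)%:Z + n%:Z * alpha i)
    /\ ((\sum_(i < k) alpha i)%:~R : rat) = ((sumn b + sumn c)%N%:Z - (sumn nu)%:Z)%:~R / n%:R)
  = congr_add b c nu.
Proof.
move=> n_gt0 nu_le; apply/bool_ofP/forallP => [[alpha [shift _]] j | dvd].
  have := shift j; have := nu_le j.
  move: (tnth b j) (tnth c j) (tnth nu j) (alpha j) => x y z a z_le e.
  change (n%:Z %| (x + y + (n - z))%N%:Z)%Z; have -> : (x + y + (n - z))%N%:Z = n%:Z * (a + 1).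
    by rewrite mulrDr mulr1; move: e; move: (n%:Z * a) => m; lia.
  by rewrite dvdz_mulr.
pose alpha j := ((tnth b j + tnth c j + (n - tnth nu j)) %/ n)%N%:Z - 1.
have shift j : (tnth b j + tnth c j)%N%:Z = (tnth nu j)%:Z + n%:Z * alpha j.
  rewrite /alpha; have := divnK (dvd j); have := nu_le j.
  move: (tnth b j) (tnth c j) (tnth nu j) => x y z z_le.
  move: ((x + y + (n - z)) %/ n)%N => q e.
  by rewrite mulrBr mulr1 -PoszM mulnC e; lia.
exists alpha; split => //.
have n_sum : n%:Z * \sum_(i < k) alpha i = (sumn b + sumn c)%N%:Z - (sumn nu)%:Z.
  rewrite mulr_sumr PoszD -!sum_tnth_int -big_split -sumrB /=.
  by apply: eq_bigr => i _; rewrite -PoszD shift; ring.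
by rewrite -n_sum intrM mulrAC mulfV ?mul1r // pnatr_eq0 -lt0n.
Qed.

Lemma Ncoef_congr_pairs lam mu nu : (0 < n)%N -> inA n lam -> inA n mu -> inA n nu ->
  Ncoef n lam mu nu = congr_pairs lam mu nu.
Proof.
move=> n_gt0 /andP[lam_sorted _] /andP[mu_sorted _] nu_A.
have nu_le j : (tnth nu j <= n)%N by case/andP: (inA_tnth j nu_A).
rewrite /Ncoef /congr_pairs -sum1_card.
under [RHS]eq_bigr do rewrite -(big_minrep mu_sorted).
rewrite -(big_minrep lam_sorted).
rewrite pair_big /= big_mkcond [RHS]big_mkcond; apply: eq_bigr => -[v w] _ /=.
rewrite inE -(perm_sumn (perm_tact lam v)) -(perm_sumn (perm_tact mu w)) exists_shift_congr //.
by case: (minrep lam v && minrep mu w).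
Qed.

End CongruentPairs.

Section RootsOfUnity.
Variables (R : idomainType) (n : nat) (zeta : R).
Hypothesis zeta_prim : n.-primitive_root zeta.

Lemma sum_prim_root_expM e : \sum_(a < n) zeta ^+ (a * e) = if (n %| e)%N then n%:R else 0.
Proof.
have n_gt0 := prim_order_gt0 zeta_prim.
under eq_bigr do rewrite mulnC exprM.
rewrite (prim_order_dvd zeta_prim); have [-> | ze_neq1] := eqVneq (zeta ^+ e) 1.
  by under eq_bigr do rewrite expr1n; rewrite sumr_const card_ord.
have : (zeta ^+ e) ^+ n.-1.+1 == 1.
  by rewrite prednK // exprAC (prim_expr_order zeta_prim) expr1n.
by rewrite expfS_eq1 prednK // (negPf ze_neq1) => /eqP.
Qed.

Lemma sum_ffun_prod_prim_root k (e : 'I_k -> nat) :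
  \sum_(al : {ffun 'I_k -> 'I_n}) \prod_(j < k) zeta ^+ (al j * e j) =
  if [forall j, n %| e j]%N then n%:R ^+ k else 0.
Proof.
rewrite -(bigA_distr_bigA (fun j (a : 'I_n) => zeta ^+ (a * e j))) /=.
under eq_bigr do rewrite sum_prim_root_expM.
case: forallP => [dvd | /forallP].
  by under eq_bigr => j _ do rewrite dvd; rewrite prodr_const card_ord.
rewrite negb_forall => /existsP[j /negPf ndvd].
by rewrite (bigD1 j) //= ndvd mul0r.
Qed.

End RootsOfUnity.

Lemma dvdn_shift_eq n x y : (0 < x <= n)%N -> (0 < y <= n)%N -> (n %| x + (n - y))%N = (x == y).
Proof.
move=> x_range y_range; apply/idP/eqP => [/dvdnP[q e] | ->]; last by rewrite subnKC ?dvdnn; lia.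
have q1 : q = 1%N.
  have : (0 < q * n < 2 * n)%N by rewrite -e; lia.
  by rewrite ltn_pmul2r; [rewrite muln_gt0; lia | lia].
by move: e; rewrite q1 mul1n; lia.
Qed.

Section MonomialOrthogonality.
Variables (R : idomainType) (k n : nat) (zeta : R).
Hypothesis zeta_prim : n.-primitive_root zeta.
Implicit Types (rho lam mu nu b c : k.-tuple nat) (al : {ffun 'I_k -> 'I_n}).
Local Notation msym rho al := (monsym rho (fun j => zeta ^+ al j)).

(* zeta^(-al.nu), for nu with entries at most n *)
Definition conj_monomial nu al := \prod_(j < k) zeta ^+ (al j * (n - tnth nu j)).

Lemma monsymE rho (al : 'I_k -> 'I_n) :
  msym rho al = \sum_(b <- rearrangements rho) \prod_(j < k) zeta ^+ (al j * tnth b j).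
Proof. by apply: eq_bigr => b _; apply: eq_bigr => j _; rewrite exprM. Qed.

Lemma average_monomial (e : 'I_k -> nat) nu :
  \sum_(al : {ffun 'I_k -> 'I_n}) (\prod_(j < k) zeta ^+ (al j * e j)) * conj_monomial nu al =
  if [forall j, n %| e j + (n - tnth nu j)]%N then n%:R ^+ k else 0.
Proof.
under eq_bigr do rewrite -big_split /=.
under eq_bigr do under eq_bigr do rewrite -exprD -mulnDr.
exact: sum_ffun_prod_prim_root.
Qed.

Lemma monsym_orthogonal rho nu : inA n rho -> inA n nu ->
  \sum_(al : {ffun 'I_k -> 'I_n}) msym rho al * conj_monomial nu al = (rho == nu)%:R * n%:R ^+ k.
Proof.
move=> rho_A nu_A; under eq_bigr do rewrite monsymE mulr_suml.
rewrite exchange_big (eq_big_seq (fun b => (b == nu)%:R * n%:R ^+ k)) => [|b].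
  rewrite -mulr_suml -natr_sum -[X in X%:R]/(\sum_(b <- _) if b == nu then 1 else 0)%N.
  rewrite -big_mkcond sum1_count count_uniq_mem ?undup_uniq //.
  case/andP: rho_A nu_A => rho_sorted _ /andP[nu_sorted _].
  by rewrite mem_rearrangements_sorted // eq_sym.
rewrite mem_rearrangements => b_rho; rewrite average_monomial.
suff -> : [forall j, n %| tnth b j + (n - tnth nu j)]%N = (b == nu).
  by case: (b == nu); rewrite ?mul1r ?mul0r.
have b_range j : (0 < tnth b j <= n)%N.
  by case/andP: rho_A => _ /allP; apply; rewrite -(perm_mem b_rho) mem_tnth.
apply/forallP/eqP => [dvd | -> j]; last by rewrite dvdn_shift_eq ?inA_tnth.
by apply: eq_from_tnth => j; apply/eqP; rewrite -(@dvdn_shift_eq n) ?dvd ?b_range ?inA_tnth.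
Qed.

Lemma monsym_product_average lam mu nu :
  \sum_(al : {ffun 'I_k -> 'I_n}) msym lam al * msym mu al * conj_monomial nu al =
  (congr_pairs n lam mu nu)%:R * n%:R ^+ k.
Proof.
under eq_bigr do rewrite !monsymE big_distrlr mulr_suml /=.
under eq_bigr do under eq_bigr do rewrite mulr_suml.
rewrite exchange_big natr_sum mulr_suml; apply: eq_bigr => b _.
rewrite exchange_big natr_sum mulr_suml; apply: eq_bigr => c _.
under eq_bigr do rewrite -big_split /=.
under eq_bigr do under eq_bigr do rewrite -exprD -mulnDr.
rewrite (average_monomial (fun j => tnth b j + tnth c j)%N).
by rewrite /congr_add; case: forallP; rewrite ?mul1r ?mul0r.
Qed.

End MonomialOrthogonality.

Section MultipartitionType.
Variables (k n : nat).
Implicit Types (b : mpart k n) (lam : k.-tuple nat).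

Definition mptype_seq b : seq nat :=
  sort geq (flatten [seq nseq (psize (b i)) i.+1 | i <- enum 'I_n]).

(* The element of A_{k,n} of type b; a junk tuple when b is not an n-multipartition of k. *)
Definition mptype b : k.-tuple nat := insubd (nseq_tuple k 0%N) (mptype_seq b).

Lemma count_mptype_seq b (i : 'I_n) : count_mem i.+1 (mptype_seq b) = psize (b i).
Proof.
rewrite /mptype_seq (seq.permP (permEl (perm_sort _ _))) count_flatten -map_comp.
rewrite sumnE big_map big_enum (bigD1 i) //= count_nseq /= eqxx mul1n big1 ?addn0 // => j ji.
by rewrite count_nseq /= eqSS (inj_eq val_inj) (negPf ji).
Qed.

Lemma size_mptype_seq b : is_mpart b -> size (mptype_seq b) = k.
Proof.
case/andP=> _ /eqP <-; rewrite size_sort size_flatten /shape -map_comp sumnE big_map big_enum.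
by apply: eq_bigr => i _; rewrite /= size_nseq.
Qed.

Lemma mptypeE b : is_mpart b -> val (mptype b) = mptype_seq b.
Proof. by move=> b_mp; rewrite insubdK //; apply/eqP; rewrite size_mptype_seq. Qed.

Lemma mptypeP b : is_mpart b -> inA n (mptype b) /\ mp_type b (mptype b).
Proof.
move=> b_mp; split => [|i]; last by rewrite mptypeE // count_mptype_seq.
rewrite /inA mptypeE // sort_sorted ?geqn_total //=; apply/allP => x.
by rewrite mem_sort => /flattenP[_ /mapP[i _ ->] /nseqP[-> _]]; rewrite ltn_ord.
Qed.

Lemma mp_type_uniq b lam1 lam2 : inA n lam1 -> inA n lam2 ->
  mp_type b lam1 -> mp_type b lam2 -> lam1 = lam2.
Proof.
move=> /andP[sorted1 range1] /andP[sorted2 range2] type1 type2.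
apply/val_inj/(sorted_eq geqn_trans geqn_anti) => //; apply/allP => x x12.
have /andP[x_gt0 x_le] : (0 < x <= n)%N.
  by move: x12; rewrite mem_cat => /orP[/(allP range1) | /(allP range2)].
have x_lt : (x.-1 < n)%N by rewrite prednK.
by rewrite /= -(prednK x_gt0) -[x.-1]/(val (Ordinal x_lt)) -type1 -type2.
Qed.

Lemma mp_typeP b lam : is_mpart b -> inA n lam -> reflect (mp_type b lam) (mptype b == lam).
Proof.
move=> b_mp lam_A; have [type_A type_b] := mptypeP b_mp.
by apply: (iffP eqP) => [<- // | type_lam]; apply: mp_type_uniq type_A lam_A type_b type_lam.
Qed.

End MultipartitionType.

Lemma yalpha_exists k n (alpha : 'I_k -> 'I_n) : (0 < n)%N -> exists g, is_yalpha alpha g.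
Proof.
move=> n_gt0; pose f (x : 'I_n * 'I_k) := (Ordinal (ltn_pmod (x.1 + alpha x.2) n_gt0), x.2).
have f_inj : injective f.
  move=> [a j] [a' j'] [/eqP e jj']; rewrite -jj' in e *; congr (_, _); apply/val_inj/eqP.
  by move: e; rewrite eqn_modDr !modn_small.
by exists (perm f_inj) => x; rewrite permE.
Qed.

Section Characters.
Variables (k n : nat) (zeta : algC) (L : mpart k n -> Iirr (SG n k)).
Hypotheses (n_gt0 : (0 < n)%N) (zeta_prim : n.-primitive_root zeta).
Hypothesis L_inj : {in [pred b | is_mpart b] &, injective L}.
Hypothesis L_surj : forall i : Iirr (SG n k), exists2 b, is_mpart b & L b = i.
Hypothesis L_trace : forall b : mpart k n, is_mpart b ->
  forall lam : k.-tuple nat, inA n lam -> mp_type b lam ->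
  forall (alpha : 'I_k -> 'I_n) (g : {perm 'I_n * 'I_k}), is_yalpha alpha g ->
    'chi_(L b) g = (fmp b)%:R * monsym lam (fun j => zeta ^+ alpha j).
Implicit Types (b bl bm : mpart k n) (lam mu nu : k.-tuple nat).
Local Notation msym rho alpha := (monsym rho (fun j => zeta ^+ alpha j)).

Lemma fmp_neq0 b : is_mpart b -> (fmp b)%:R != 0 :> algC.
Proof.
move=> b_mp; have [type_A type_b] := mptypeP b_mp.
have y0 : is_yalpha (fun _ : 'I_k => Ordinal n_gt0) 1%g.
  by move=> x; rewrite perm1 /= addn0 modn_small.
apply: contra_neq (irr1_neq0 (L b)) => f0.
by rewrite (L_trace b_mp type_A type_b y0) f0 mul0r.
Qed.

Lemma trace_product_expansion bl bm lam mu (alpha : 'I_k -> 'I_n) :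
  is_mpart bl -> is_mpart bm -> inA n lam -> inA n mu -> mp_type bl lam -> mp_type bm mu ->
  (fmp bl)%:R * msym lam alpha * ((fmp bm)%:R * msym mu alpha) =
  \sum_(b | is_mpart b) cstr (L bl) (L bm) (L b) * ((fmp b)%:R * msym (mptype b) alpha).
Proof.
move=> bl_mp bm_mp lam_A mu_A bl_lam bm_mu; have [g y_g] := yalpha_exists alpha n_gt0.
rewrite -(L_trace bl_mp lam_A bl_lam y_g) -(L_trace bm_mp mu_A bm_mu y_g).
transitivity (('chi_(L bl) * 'chi_(L bm)) g); first by rewrite cfunE.
rewrite {1}(cfun_sum_cfdot ('chi_(L bl) * 'chi_(L bm))) sum_cfunE.
have L_onto i : i \in L @: [set b | is_mpart b].
  by have [b b_mp <-] := L_surj i; rewrite imset_f ?inE.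
rewrite (eq_bigl (mem (L @: [set b | is_mpart b]))) => [|i]; last exact/esym/L_onto.
rewrite big_imset /=; last by move=> b b' /[!inE]; apply: L_inj.
apply: eq_big => [b | b /[!inE] b_mp]; first by rewrite inE.
have [type_A type_b] := mptypeP b_mp.
by rewrite cfunE (L_trace b_mp type_A type_b y_g).
Qed.

Lemma congr_pairs_cstr lam mu nu bl bm :
  inA n lam -> inA n mu -> inA n nu -> is_mpart bl -> is_mpart bm ->
  mp_type bl lam -> mp_type bm mu ->
  (fmp bl)%:R * (fmp bm)%:R * (congr_pairs n lam mu nu)%:R =
  \sum_(b | is_mpart b && (mptype b == nu)) cstr (L bl) (L bm) (L b) * (fmp b)%:R.
Proof.
move=> lam_A mu_A nu_A bl_mp bm_mp bl_lam bm_mu.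
have N_neq0 : n%:R ^+ k != 0 :> algC by rewrite expf_neq0 // pnatr_eq0 -lt0n.
have expand (alpha : {ffun 'I_k -> 'I_n}) :
    (fmp bl)%:R * (fmp bm)%:R * (msym lam alpha * msym mu alpha) =
    \sum_(b | is_mpart b) cstr (L bl) (L bm) (L b) * (fmp b)%:R * msym (mptype b) alpha.
  rewrite mulrACA (trace_product_expansion _ bl_mp bm_mp lam_A mu_A bl_lam bm_mu).
  by under eq_bigr do rewrite mulrA.
apply: (mulIf N_neq0); rewrite -(mulrA _ _ (n%:R ^+ k)).
rewrite -(monsym_product_average zeta_prim) mulr_sumr.
under eq_bigr do rewrite mulrA expand mulr_suml.
rewrite exchange_big mulr_suml [RHS]big_mkcondr /=; apply: eq_bigr => b b_mp.
have [type_A _] := mptypeP b_mp.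
under eq_bigr do rewrite -(mulrA (_ * _)).
rewrite -mulr_sumr (monsym_orthogonal zeta_prim type_A nu_A).
by case: (mptype b == nu); rewrite ?mul1r ?mul0r ?mulr0.
Qed.

End Characters.

Unset Implicit Arguments.

Theorem mainTheorem11 (k n : nat) (hk : (0 < k)%N) (hn : (0 < n)%N)
  (zeta : algC) (hzeta : n.-primitive_root zeta)
  (L : mpart k n -> Iirr (SG n k))
  (L_inj : {in [pred b | is_mpart b] &, injective L})
  (L_surj : forall i : Iirr (SG n k), exists2 b, is_mpart b & L b = i)
  (L_trace : forall b : mpart k n, is_mpart b ->
     forall lam : k.-tuple nat, inA n lam -> mp_type b lam ->
     forall (alpha : 'I_k -> 'I_n) (g : {perm 'I_n * 'I_k}), is_yalpha alpha g ->
       'chi_(L b) g = (fmp b)%:R * monsym lam (fun j => zeta ^+ alpha j))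
  (lam mu nu : k.-tuple nat) (hlam : inA n lam) (hmu : inA n mu) (hnu : inA n nu)
  (blam bmu : mpart k n) (hblam : is_mpart blam) (hbmu : is_mpart bmu)
  (tlam : mp_type blam lam) (tmu : mp_type bmu mu) :
  (Ncoef n lam mu nu)%:R =
    \sum_(bnu : mpart k n | is_mpart bnu && bool_of (mp_type bnu nu))
       cstr (L blam) (L bmu) (L bnu) * (fmp bnu)%:R / ((fmp blam)%:R * (fmp bmu)%:R).
Proof.
have f_neq0 : (fmp blam)%:R * (fmp bmu)%:R != 0 :> algC.
  by rewrite mulf_neq0 ?(fmp_neq0 hn L_trace).
rewrite (Ncoef_congr_pairs hn hlam hmu hnu) -mulr_suml.
rewrite (eq_bigl (fun b => is_mpart b && (mptype b == nu))) => [|b]; last first.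
  by case b_mp: (is_mpart b) => //=; apply/bool_ofP/(mp_typeP b_mp hnu).
rewrite -(congr_pairs_cstr hn hzeta L_inj L_surj L_trace hlam hmu hnu hblam hbmu tlam tmu).
by rewrite mulrC mulKf.
Qed.
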